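(* Let $D_\infty=\langle s,t\mid t^2,\ tsts\rangle$ with word metric $d(g_1,g_2)=|g_2g_1^{-1}|_S$ for $S=\{s^{\pm1},t\}$. Let $\alpha,\beta$ be minimal continuous actions of $D_\infty$ on an infinite compact Hausdorff space $X$, and suppose they are continuously orbit equivalent via a homeomorphism $\phi:X\to X$ and continuous cocycle $c:D_\infty\times X\to D_\infty$ with $\phi(\alpha_g x)=\beta_{c(g,x)}(\phi(x))$ for all $g,x$. Define $X_+=\{x\in X: \sup_{n\in\mathbb{Z}} d(c(s^n,x),s^n)<\infty\}$ and $X_-=\{x\in X: \sup_{n\in\mathbb{Z}} d(c(s^n,x),s^{-n})<\infty\}$. Then $X=X_+\sqcup X_-$ and both $X_+$ and $X_-$ are clopen in $X$.
   Context: Continuous orbit equivalence of two actions of $D_\infty$ on $X$: a homeomorphism $\phi:X\to X$ with inverse $\psi$ and continuous maps $a,b:D_\infty\times X\to D_\infty$ with $\phi(\alpha_g x)=\beta_{a(g,x)}\phi(x)$ and $\psi(\beta_h y)=\alpha_{b(h,y)}\psi(y)$; since the actions are topologically free, $a=c$ is a cocycle, i.e. $c(g_1g_2,x)=c(g_1,\alpha_{g_2}x)c(g_2,x)$. *)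

From HB Require Import structures.
From mathcomp Require Import all_boot all_order all_algebra.
From mathcomp Require Import all_classical all_reals all_analysis.
Set Implicit Arguments. Unset Strict Implicit. Unset Printing Implicit Defensive.
Import Order.TTheory GRing.Theory Num.Theory.
Local Open Scope ring_scope.

(* The infinite dihedral group D_oo = < s, t | t^2, tsts >.
   Every element has a unique normal form s^n t^b (n : int, b : bool);
   we use these normal forms as the carrier. *)
Definition Dinf := (int * bool)%type.

Definition dmul (g h : Dinf) : Dinf :=
  (g.1 + (if g.2 then - h.1 else h.1), g.2 (+) h.2).
Definition dinv (g : Dinf) : Dinf := if g.2 then g else (- g.1, false).
Definition d1 : Dinf := (0, false).

Definition ds : Dinf := (1, false).
Definition dt : Dinf := (0, true).
Definition dspow (n : int) : Dinf := (n, false).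

Inductive gen := GS | GSinv | GT.
Definition gen_val (a : gen) : Dinf :=
  match a with GS => ds | GSinv => dinv ds | GT => dt end.
Definition eval_word (w : seq gen) : Dinf :=
  foldr (fun a g => dmul (gen_val a) g) d1 w.

Lemma eval_nseqS (k : nat) (w : seq gen) :
  eval_word (nseq k GS ++ w) = dmul (k%:Z, false) (eval_word w).
Proof.
elim: k => [|k IH] /=.
  by rewrite /dmul /= add0r; case: (eval_word w).
rewrite IH /dmul /=; congr (_, _); by rewrite addrA -PoszD add1n.
Qed.

Lemma eval_nseqSinv (k : nat) (w : seq gen) :
  eval_word (nseq k GSinv ++ w) = dmul (- k%:Z, false) (eval_word w).
Proof.
elim: k => [|k IH] /=.
  by rewrite /dmul /= oppr0 add0r; case: (eval_word w).
rewrite IH /dmul /=; congr (_, _).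
by rewrite addrA -opprD -PoszD add1n.
Qed.

Lemma word_exists0 (g : Dinf) : exists n, exists w : seq gen,
  size w = n /\ eval_word w = g.
Proof.
case: g => n b.
pose tw := if b then [:: GT] else [::].
have Htw : eval_word tw = (0, b).
  by rewrite /tw; case: (b) => //=; rewrite /dmul /= oppr0 addr0.
case: (lerP 0 n) => Hn.
  exists (size (nseq `|n|%N GS ++ tw)), (nseq `|n|%N GS ++ tw); split => //.
  by rewrite eval_nseqS Htw /dmul /= addr0 gez0_abs.
exists (size (nseq `|n|%N GSinv ++ tw)), (nseq `|n|%N GSinv ++ tw); split => //.
by rewrite eval_nseqSinv Htw /dmul /= addr0 ltz0_abs // opprK.
Qed.

Definition represented_by_word_of_length (g : Dinf) (n : nat) : bool :=
  `[< exists w : seq gen, size w = n /\ eval_word w = g >].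

Lemma word_exists (g : Dinf) : exists n, represented_by_word_of_length g n.
Proof.
by have [n Hn] := word_exists0 g; exists n; apply/asboolP.
Qed.

Definition wordlen (g : Dinf) : nat := ex_minn (word_exists g).

Definition dmetric (g1 g2 : Dinf) : nat := wordlen (dmul g2 (dinv g1)).

Local Open Scope classical_set_scope.

Definition is_cont_action (X : topologicalType) (a : Dinf -> X -> X) : Prop :=
  (forall x, a d1 x = x) /\
  (forall g h x, a (dmul g h) x = a g (a h x)) /\
  (forall g, continuous (a g)).

Definition minimal_action (X : topologicalType) (a : Dinf -> X -> X) : Prop :=
  forall x, closure [set a g x | g in [set: Dinf]] = [set: X].

(* continuity of a map D_oo x X -> D_oo, D_oo being discrete:
   for each g, x |-> c g x is locally constant *)
Definition cont_DX (X : topologicalType) (c : Dinf -> X -> Dinf) : Prop :=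
  forall g x, \forall y \near x, c g y = c g x.

From HB Require Import structures.
From mathcomp Require Import all_boot all_order all_algebra.
From mathcomp Require Import all_classical all_reals all_analysis.
From mathcomp Require Import zify ring lra.
Import Order.TTheory GRing.Theory Num.Theory.
Set Implicit Arguments. Unset Strict Implicit. Unset Printing Implicit Defensive.
Local Open Scope classical_set_scope.
Local Open Scope ring_scope.

(* Write g = s^n t^e as the pair (n, e); its coordinate [coord g] is its
   position on the line Z on which D_oo acts (n if e = false, -n otherwise),
   and the word metric is d(g1, g2) = |coord g2 - coord g1| + [e1 != e2].
   For a point x, the trace [axis (c ^~ x) n] is the coordinate of c(s^n, x).
   1. Coarse rigidity of the line (line_qi_rigid): a bijection th of D_oo
      which, read through coordinates, is a coarse quasi-isometry governed by
      its trace on the axis <s>, has a trace within a bounded distance of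
      n |-> n or of n |-> -n.  The trace is coarsely monotone; counting
      elements in windows of coordinates, using that th is bijective, pins
      its slope down to 1.
   2. By compactness the cocycles are uniformly bounded on generators, so at
      any point x which is free for alpha with phi x free for beta the map
      g |-> c(g, x) satisfies the hypotheses of 1 (cocycle_line_qi).
   3. In a minimal action on an infinite compact Hausdorff space s has no
      periodic point and each reflection s^k t fixes a closed set with empty
      interior; by Baire's theorem the doubly free points are dense.
   4. Since c is locally constant, the sign of the trace at a fixed integer
      decides at every point which alternative of 1 holds (orient_sign).
      X_+ and X_- are the two level sets of this locally constant sign, hence
      complementary clopen sets. *)

Lemma dmulA (g h k : Dinf) : dmul g (dmul h k) = dmul (dmul g h) k.
Proof.
case: g h k => [g1 []] [h1 []] [k1 []]; rewrite /dmul /=; congr pair; lia.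
Qed.

Lemma dmul1g (g : Dinf) : dmul d1 g = g.
Proof. by case: g => g1 g2; rewrite /dmul /= add0r. Qed.

Lemma dmulg1 (g : Dinf) : dmul g d1 = g.
Proof. by case: g => g1 [|]; rewrite /dmul /= ?oppr0 addr0. Qed.

Lemma dmulVg (g : Dinf) : dmul (dinv g) g = d1.
Proof. by case: g => g1 [|]; rewrite /dmul /dinv /d1 /=; congr pair; lia. Qed.

Lemma dmulKg (g h : Dinf) : dmul (dinv g) (dmul g h) = h.
Proof. by rewrite dmulA dmulVg dmul1g. Qed.

Lemma dmul_inj (g : Dinf) : injective (dmul g).
Proof. by move=> h k E; rewrite -(dmulKg g h) E dmulKg. Qed.

(* The coordinate of g along the Cayley graph of D_oo, which is a ladder:
   left multiplication by s^(+-1) moves the coordinate by one and t keeps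
   it (coord_mul), so the word metric is the difference of coordinates plus
   the parity bit (dmetricE). *)
Definition coord (g : Dinf) : int := if g.2 then - g.1 else g.1.

Lemma coord_mul (h g : Dinf) : `|coord (dmul h g) - coord g| = `|h.1|.
Proof.
case: h g => [h1 []] [g1 []]; rewrite /coord /dmul /=; lia.
Qed.

Lemma coord_quot (g1 g2 : Dinf) :
  `|(dmul g2 (dinv g1)).1| = `|coord g2 - coord g1|.
Proof. case: g1 g2 => [a1 []] [a2 []]; rewrite /coord /dmul /dinv /=; lia. Qed.

Definition dlen (g : Dinf) : nat := (`|g.1|%N + g.2)%N.

Lemma dlen_eval (w : seq gen) : (dlen (eval_word w) <= size w)%N.
Proof.
elim: w => [|a w IH] //=; move: IH; case: (eval_word w) => m e.
by case: a; rewrite /dlen /dmul /=; case: e => /=; lia.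
Qed.

Lemma geodesic_word (g : Dinf) : exists w, size w = dlen g /\ eval_word w = g.
Proof.
case: g => n e; pose tw := if e then [:: GT] else [::].
have Etw : eval_word tw = (0, e).
  by rewrite /tw; case: (e) => //=; rewrite /dmul /= oppr0 addr0.
have Stw : size tw = e by rewrite /tw; case: (e).
have [n_ge0|n_lt0] := lerP 0 n.
  exists (nseq `|n|%N GS ++ tw); rewrite size_cat size_nseq Stw.
  by rewrite eval_nseqS Etw /dmul /= addr0 gez0_abs.
exists (nseq `|n|%N GSinv ++ tw); rewrite size_cat size_nseq Stw.
by rewrite eval_nseqSinv Etw /dmul /= addr0 ltz0_abs // opprK.
Qed.

Lemma wordlenE (g : Dinf) : wordlen g = dlen g.
Proof.
rewrite /wordlen; case: ex_minnP => m /asboolP [w [<- <-]] minm.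
apply/eqP; rewrite eqn_leq dlen_eval andbT.
have [w' [<- Ew']] := geodesic_word (eval_word w).
by apply: minm; apply/asboolP; exists w'.
Qed.

Lemma dmetricE (g1 g2 : Dinf) :
  dmetric g1 g2 = (`|coord g2 - coord g1|%N + (g1.2 (+) g2.2))%N.
Proof.
rewrite /dmetric wordlenE /dlen.
case: g1 g2 => [a1 []] [a2 []]; rewrite /coord /dmul /dinv /=; lia.
Qed.

Definition window (a : int) (len : nat) : seq Dinf :=
  [seq (a + k%:Z, false) | k <- iota 0 len] ++
  [seq (- (a + k%:Z), true) | k <- iota 0 len].

Lemma mem_window (a : int) (len : nat) (g : Dinf) :
  (g \in window a len) = (a <= coord g < a + len%:Z).
Proof.
case: g => m e; rewrite /window mem_cat /coord /=.
apply/idP/idP.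
  by case/orP => /mapP [k]; rewrite mem_iota add0n => Hk [-> ->]; lia.
case: e => /= Hm; apply/orP; [right|left]; apply/mapP.
  by exists `|- m - a|%N; [rewrite mem_iota; lia | congr pair; lia].
by exists `|m - a|%N; [rewrite mem_iota; lia | congr pair; lia].
Qed.

Lemma window_uniq (a : int) (len : nat) : uniq (window a len).
Proof.
rewrite /window cat_uniq; apply/and3P; split.
- rewrite map_inj_uniq ?iota_uniq // => k k' [] /eqP.
  by rewrite (inj_eq (addrI _)) => /eqP [].
- by apply/hasPn => g /mapP [k _ ->]; apply/mapP => [[k' _]].
- rewrite map_inj_uniq ?iota_uniq // => k k' [] /eqP.
  by rewrite eqr_opp (inj_eq (addrI _)) => /eqP [].
Qed.

Lemma size_window (a : int) (len : nat) : size (window a len) = (len + len)%N.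
Proof. by rewrite size_cat !size_map size_iota. Qed.

Lemma window_inj_le (f : Dinf -> Dinf) (a a' : int) (n n' : nat) :
  injective f -> (forall g, g \in window a n -> f g \in window a' n') ->
  (n <= n')%N.
Proof.
move=> f_inj f_win.
have sub : {subset map f (window a n) <= window a' n'}.
  by move=> y /mapP [g Hg ->]; apply: f_win.
have := uniq_leq_size _ sub; rewrite map_inj_uniq // window_uniq.
by rewrite size_map !size_window => /(_ isT); lia.
Qed.

Lemma window_surj_le (f : Dinf -> Dinf) (a a' : int) (n n' : nat) :
  (forall y, exists g, f g = y) ->
  (forall g, f g \in window a' n' -> g \in window a n) -> (n' <= n)%N.
Proof.
move=> f_surj f_win.
have sub : {subset window a' n' <= map f (window a n)}.
  move=> y Hy; have [g Hg] := f_surj y; apply/mapP; exists g => //.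
  by apply: f_win; rewrite Hg.
have := uniq_leq_size (window_uniq a' n') sub.
by rewrite size_map !size_window; lia.
Qed.

Definition axis (th : Dinf -> Dinf) (n : int) : int := coord (th (n, false)).

(* This is what an orbit equivalence cocycle yields
   at a free point, L bounding the cocycles on generators. *)
Record line_qi (L : nat) (th : Dinf -> Dinf) : Prop := LineQI {
  lqi_inj : injective th;
  lqi_surj : forall y, exists g, th g = y;
  lqi_near_axis : forall g, `|coord (th g) - axis th (coord g)| <= L%:Z;
  lqi_step : forall n, `|axis th (n + 1) - axis th n| <= L%:Z;
  lqi_expand : forall g1 g2,
    `|coord g2 - coord g1| <= L%:Z * (`|coord (th g2) - coord (th g1)| + 1);
  lqi_axis0 : axis th 0 = 0;
  lqi_L_gt0 : (0 < L)%N }.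

(* After kstep L steps along the axis the trace has moved by > 2 L; after
   kfar L steps it has moved forward by > L (once it is increasing); the
   trace is then within qi_bound L of the identity. *)
Definition kstep (L : nat) : nat := (L * (2 * L + 2))%N.
Definition kfar (L : nat) : nat := (kstep L * (L + 1 + kstep L * L))%N.
Definition qi_bound (L : nat) : nat := (2 * kfar L + kstep L * L + 1)%N.

Lemma kstep_gt0 (L : nat) : (0 < L)%N -> (0 < kstep L)%N.
Proof. by move=> L0; rewrite /kstep muln_gt0 L0 addn2. Qed.

Section LineQuasiIsometry.
Variables (L : nat) (th : Dinf -> Dinf).
Hypothesis qi : line_qi L th.

Let q := axis th.
Let K := kstep L.

Lemma axis_drop (n : int) (i : nat) : q n - (i * L)%N%:Z <= q (n + i%:Z).
Proof.
elim: i => [|i IH]; first by rewrite mul0n subr0 (_ : n + 0%:Z = n) // addr0.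
have := lqi_step qi (n + i%:Z); rewrite -/q mulSn -addn1 [Posz (i + 1)]PoszD.
rewrite addrA (_ : n + i%:Z + 1%:Z = n + i%:Z + 1) //; move: IH; lia.
Qed.

(* By coarse injectivity the trace moves by more than 2 L over K steps. *)
Lemma axis_gap (n : int) : (2 * L + 1)%N%:Z <= `|q (n + K%:Z) - q n|.
Proof.
have := lqi_expand qi (n, false) (n + K%:Z, false).
change (coord (th (n + K%:Z, false))) with (q (n + K%:Z)).
change (coord (th (n, false))) with (q n).
rewrite /= (_ : n + K%:Z - n = K%:Z); last by ring.
rewrite ger0_norm // /K /kstep PoszM ler_pM2l ?ltz_nat ?(lqi_L_gt0 qi) //.
lia.
Qed.

Definition gap (n : int) : int := q (n + K%:Z) - q n.

(* Since the gap is large and changes by at most 2 L per step, its sign is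
   constant. *)
Lemma gap_sign_step (n : int) : (0 < gap n) = (0 < gap (n + 1)).
Proof.
have h1 := lqi_step qi n; have h2 := lqi_step qi (n + K%:Z).
have g1 := axis_gap n; have g2 := axis_gap (n + 1).
rewrite /gap (addrAC n 1); move: h1 h2 g1 g2; rewrite -/q.
set a := q (n + K%:Z); set b := q n; set c := q (n + K%:Z + 1).
set d := q (n + 1); clearbody a b c d => h1 h2 g1 g2; apply/idP/idP; lia.
Qed.

Lemma gap_pos (n : int) : 0 < gap 0 -> 0 < gap n.
Proof.
move=> gap0.
have gapN (k : nat) : 0 < gap k by elim: k => // k IH; rewrite -addn1 PoszD -gap_sign_step.
have gapNN (k : nat) : 0 < gap (- k%:Z).
  elim: k => // k IH.
  by rewrite gap_sign_step -addn1 PoszD opprD -addrA addNr addr0.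
by case: n => k; [apply: gapN | rewrite NegzE; apply: gapNN].
Qed.

Section IncreasingTrace.
Hypothesis gap0 : 0 < gap 0.

Lemma axis_blocks (j i : nat) (n : int) :
  q n + (j * (2 * L + 1))%N%:Z - (i * L)%N%:Z <= q (n + (j * K + i)%N%:Z).
Proof.
elim: j n => [|j IH] n; first by rewrite !mul0n add0n addr0; apply: axis_drop.
have := IH (n + K%:Z); have := gap_pos n gap0; have := axis_gap n.
rewrite /gap !mulSn -!addnA [Posz (K + _)]PoszD addrA.
set a := q (n + K%:Z); set b := q n; set c := q (n + K%:Z + _).
by rewrite !PoszD; clearbody a b c; lia.
Qed.

Lemma axis_forward (n : int) (d : nat) :
  q n - (K * L)%N%:Z <= q (n + d%:Z) /\
  ((kfar L <= d)%N -> q n + (L + 1)%N%:Z <= q (n + d%:Z)).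
Proof.
have K0 : (0 < K)%N := kstep_gt0 (lqi_L_gt0 qi).
have := axis_blocks (d %/ K) (d %% K) n; rewrite -divn_eq.
have H1 : (d %% K * L <= K * L)%N by rewrite leq_mul2r ltnW ?ltn_pmod ?orbT.
have H2 : (d %/ K <= d %/ K * (2 * L + 1))%N by rewrite leq_pmulr // addn1.
have H3 : (kfar L <= d)%N -> (L + 1 + K * L <= d %/ K)%N.
  by move=> Hd; rewrite leq_divRL // mulnC.
move: H1 H2 H3; set j := (d %/ K)%N; set i := (d %% K)%N.
set x := (i * L)%N; set y := (K * L)%N; set z := (j * (2 * L + 1))%N.
clearbody j i x y z => H1 H2 H3 H; split; first lia.
by move=> /H3; lia.
Qed.

Lemma axis_no_drop (m n : int) : m <= n -> q m - (K * L)%N%:Z <= q n.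
Proof.
move=> mn; have [+ _] := axis_forward m `|n - m|%N.
by rewrite (_ : m + `|n - m|%N%:Z = n) //; lia.
Qed.

Lemma axis_ahead (m n : int) : m + (kfar L)%:Z <= n ->
  q m + (L + 1)%N%:Z <= q n.
Proof.
move=> mn; have [_ +] := axis_forward m `|n - m|%N.
by rewrite (_ : m + `|n - m|%N%:Z = n); [apply; lia | lia].
Qed.

(* Lower bound: th maps the coordinates in [kfar L, n - kfar L) into
   [0, q n), and it is injective, so q n is at least about n. *)
Lemma axis_lower (n : nat) :
  n%:Z - (2 * kfar L)%N%:Z - (K * L)%N%:Z <= q n.
Proof.
have h0 : q 0 = 0 := lqi_axis0 qi.
have [n_small|n_big] := ltnP n (2 * kfar L).
  by have := axis_no_drop (m := 0) (n := n); rewrite h0; lia.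
have qn : (L + 1)%N%:Z <= q n.
  by have := axis_ahead (m := 0) (n := n); rewrite h0; lia.
have := @window_inj_le th (kfar L)%:Z 0 (n - 2 * kfar L) `|q n|%N (lqi_inj qi).
suff win : forall g, g \in window (kfar L)%:Z (n - 2 * kfar L) ->
    th g \in window 0 `|q n|.
  by move=> /(_ win); lia.
move=> g; rewrite !mem_window add0r => /andP [k1 k2].
have := lqi_near_axis qi g; rewrite -/q.
have := axis_ahead (m := 0) (n := coord g); have := axis_ahead (m := coord g) (n := n).
move: k1 k2 qn; rewrite h0; set k := coord g; set w := coord (th g).
by set u := q k; set v := q n; clearbody k w u v; lia.
Qed.

(* Upper bound: th is onto, and only the coordinates in
   [- kfar L, n + kfar L] are mapped into [0, q n), so q n is at most about
   n. *)
Lemma axis_upper (n : nat) : q n <= n%:Z + (2 * kfar L + 1)%N%:Z.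
Proof.
have h0 : q 0 = 0 := lqi_axis0 qi.
have [qn_le0|qn_gt0] := lerP (q n) 0; first lia.
have := @window_surj_le th (- (kfar L)%:Z) 0 (n + 2 * kfar L + 1) `|q n|%N
  (lqi_surj qi).
suff win : forall g, th g \in window 0 `|q n| ->
    g \in window (- (kfar L)%:Z) (n + 2 * kfar L + 1).
  by move=> /(_ win); lia.
move=> g; rewrite !mem_window add0r => /andP [k1 k2].
have := lqi_near_axis qi g; rewrite -/q.
have := axis_ahead (m := coord g) (n := 0); have := axis_ahead (m := n) (n := coord g).
move: k1 k2 qn_gt0; rewrite h0; set k := coord g; set w := coord (th g).
by set u := q k; set v := q n; clearbody k w u v; lia.
Qed.

Lemma axis_near_id_nat (n : nat) : `|q n%:Z - n%:Z| <= (qi_bound L)%:Z.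
Proof. by have := axis_lower n; have := axis_upper n; rewrite /qi_bound; lia. Qed.

End IncreasingTrace.
End LineQuasiIsometry.

(* The reflection of the line, s^n t^e |-> s^-n t^e, negates coordinates;
   composing with it reduces the decreasing case to the increasing one. *)
Definition flip (g : Dinf) : Dinf := (- g.1, g.2).

Lemma coord_flip (g : Dinf) : coord (flip g) = - coord g.
Proof. by case: g => m []. Qed.

Lemma flipK : involutive flip.
Proof. by case=> m e; rewrite /flip /= opprK. Qed.

Lemma flip_inj : injective flip.
Proof. exact: inv_inj flipK. Qed.

Lemma axis_flipl (th : Dinf -> Dinf) (n : int) : axis (flip \o th) n = - axis th n.
Proof. by rewrite /axis /= coord_flip. Qed.

Lemma axis_conj (th : Dinf -> Dinf) (n : int) :
  axis (flip \o th \o flip) n = - axis th (- n).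
Proof. by rewrite /axis /= coord_flip. Qed.

Lemma line_qi_flipl (L : nat) (th : Dinf -> Dinf) :
  line_qi L th -> line_qi L (flip \o th).
Proof.
case=> thi ths near step expand ax0 L0; split => //.
- by move=> x y /= /flip_inj /thi.
- by move=> y; have [g Hg] := ths (flip y); exists g; rewrite /= Hg flipK.
- by move=> g; rewrite axis_flipl /= coord_flip; have := near g; lia.
- by move=> n; rewrite !axis_flipl; have := step n; lia.
- by move=> g1 g2 /=; rewrite !coord_flip -opprD normrN.
- by rewrite axis_flipl ax0.
Qed.

Lemma line_qi_conj (L : nat) (th : Dinf -> Dinf) :
  line_qi L th -> line_qi L (flip \o th \o flip).
Proof.
case=> thi ths near step expand ax0 L0; split => //.
- by move=> x y /= /flip_inj /thi /flip_inj.
- move=> y; have [g Hg] := ths (flip y); exists (flip g).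
  by rewrite /= flipK Hg flipK.
- move=> g; rewrite axis_conj /= coord_flip; have := near (flip g).
  by rewrite coord_flip; lia.
- move=> n; rewrite !axis_conj (_ : - (n + 1) = - n - 1); last by ring.
  by have := step (- n - 1); rewrite (_ : - n - 1 + 1 = - n); [lia | ring].
- move=> g1 g2 /=; have := expand (flip g1) (flip g2).
  by rewrite !coord_flip -!opprD !normrN.
- by rewrite axis_conj oppr0 ax0.
Qed.

(* An increasing trace is close to the identity on all of Z: on negative
   integers apply the nonnegative case to the conjugate flip \o th \o flip. *)
Lemma axis_near_id (L : nat) (th : Dinf -> Dinf) : line_qi L th ->
  0 < gap L th 0 -> forall n : int, `|axis th n - n| <= (qi_bound L)%:Z.
Proof.
move=> qi gap0; case=> k; first exact: axis_near_id_nat qi gap0 k.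
have gap0' : 0 < gap L (flip \o th \o flip) 0.
  have := gap_pos qi (- (kstep L)%:Z) gap0.
  by rewrite /gap !axis_conj !add0r opprK oppr0 addNr; lia.
have := axis_near_id_nat (line_qi_conj qi) gap0' k.+1.
by rewrite axis_conj NegzE; lia.
Qed.

Theorem line_qi_rigid (L : nat) (th : Dinf -> Dinf) : line_qi L th ->
  (forall n : int, `|axis th n - n| <= (qi_bound L)%:Z) \/
  (forall n : int, `|axis th n + n| <= (qi_bound L)%:Z).
Proof.
move=> qi.
have big : (2 * L + 1)%N%:Z <= `|gap L th 0| := axis_gap qi 0.
case: (ltrgt0P (gap L th 0)) => gap0.
- by left; apply: axis_near_id.
- right => n; have gap0' : 0 < gap L (flip \o th) 0.
    by rewrite /gap !axis_flipl; move: gap0; rewrite /gap; lia.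
  by have := axis_near_id (line_qi_flipl qi) gap0' n; rewrite axis_flipl; lia.
- by move: big; rewrite gap0 normr0 lez_nat addn1.
Qed.

Lemma compact_uniform_index (X : topologicalType) (P : nat -> X -> Prop) :
  compact [set: X] ->
  (forall x : X, exists n0, exists2 U : set X, nbhs x U &
      forall y m, U y -> (n0 <= m)%N -> P m y) ->
  exists n, forall y, P n y.
Proof.
move=> /compact_near_coveringP cX locP.
have [] := cX nat \oo P _.
  move=> x _; have [n0 [U Ux HU]] := locP x.
  exists (U, [set m | (n0 <= m)%N]); first by split => //; exists n0.
  by move=> [y m] [/= Uy Hm]; apply: HU.
by move=> N _ HN; exists N => y; exact: (HN N (leqnn N) y I).
Qed.

Lemma locally_constant_bounded (X : topologicalType) (T : Type)
    (f : X -> T) (size : T -> nat) :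
  compact [set: X] -> (forall x, \forall y \near x, f y = f x) ->
  exists N, forall y, (size (f y) <= N)%N.
Proof.
move=> cX f_lc; apply: (compact_uniform_index cX) => x.
exists (size (f x)), [set y | f y = f x]; first exact: f_lc.
by move=> y m /= ->.
Qed.

(* A compact space in which every point is isolated is finite: otherwise
   the filter of cofinite sets would have a cluster point x, yet it contains
   the complement of the neighbourhood [set x]. *)
Lemma compact_discrete_finite (X : topologicalType) :
  compact [set: X] -> (forall x : X, open [set x]) -> finite_set [set: X].
Proof.
move=> cX open1; apply: contrapT => infX.
pose F := filter_from [set A : set X | finite_set (~` A)] id.
have F_filter : Filter F.
  apply: filter_from_filter; first by exists setT => /=; rewrite setCT.
  move=> A B /= fA fB; exists (A `&` B) => //=.
  by rewrite setCI finite_setU.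
have F_proper : ProperFilter F.
  apply: filter_from_proper => A /= fA; apply/set0P/eqP => A0.
  by apply: infX; rewrite A0 setC0 in fA.
have [x [_ clx]] := cX F F_proper (filterT).
have Fx : F (~` [set x]) by exists (~` [set x]) => //=; rewrite setCK.
have nbx : nbhs x [set x] by apply: open_nbhs_nbhs; split.
by have [y [/= nyx yx]] := clx _ _ Fx nbx.
Qed.

Lemma closed_fixed_points (X : topologicalType) (f : X -> X) :
  hausdorff_space X -> continuous f -> closed [set y | f y = y].
Proof.
move=> hX fc y Hy; apply: hX => A B HA HB /=.
have HB' : nbhs y (B `&` f @^-1` A) by apply: filterI => //; exact: fc.
have [z [/= fz [Bz Az]]] := Hy _ HB'.
by exists z; split => //; rewrite -fz.
Qed.

Definition has_empty_interior (X : topologicalType) (A : set X) : Prop :=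
  forall U, open U -> U `<=` A -> U = set0.

Lemma has_empty_interiorU (X : topologicalType) (A B : set X) : closed A ->
  has_empty_interior A -> has_empty_interior B -> has_empty_interior (A `|` B).
Proof.
move=> cA thinA thinB U oU UAB.
have UA0 : U `\` A = set0.
  apply: thinB => [|z [Uz nAz]]; first by apply: openI => //; apply: closed_openC.
  by case: (UAB z Uz).
apply: (thinA _ oU) => z Uz; apply: contrapT => nAz.
by have : (U `\` A) z by []; rewrite UA0.
Qed.

(* One step of Baire's argument: inside a nonempty open set one finds a
   nonempty open set whose closure avoids a given closed set with empty
   interior (compact Hausdorff spaces are regular). *)
Lemma baire_shrink (X : topologicalType) (F : set X) : compact [set: X] ->
  hausdorff_space X -> closed F -> has_empty_interior F ->
  forall V : set X, open V -> V !=set0 ->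
  exists V' : set X, [/\ open V', V' !=set0 & closure V' `<=` V `\` F].
Proof.
move=> cX hX cF thinF V oV [z0 Vz0].
have oVF : open (V `\` F) by apply: openI => //; apply: closed_openC.
have [z [Vz nFz]] : (V `\` F) !=set0.
  apply: contrapT => VF0; suff VF : V `<=` F by rewrite (thinF V oV VF) in Vz0.
  by move=> v Vv; apply: contrapT => nFv; apply: VF0; exists v.
have [B Bz cB] := compact_regular hX cX (@filterT _ (nbhs z) _)
  (open_nbhs_nbhs (conj oVF (conj Vz nFz))).
exists B°; split; [exact: open_interior | by exists z |].
by apply: subset_trans cB; apply: closureS; apply: interior_subset.
Qed.

Theorem compact_baire (X : topologicalType) (F : nat -> set X) :
  compact [set: X] -> hausdorff_space X -> (forall n, closed (F n)) ->
  (forall n, has_empty_interior (F n)) ->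
  forall (x : X) W, nbhs x W -> exists2 y, W y & forall n, ~ F n y.
Proof.
move=> cX hX cF thinF x W Wx.
have shrink n (V : set X) : exists V' : set X, open V /\ V !=set0 ->
    [/\ open V', V' !=set0 & closure V' `<=` V `\` F n].
  have [[oV nV]|noV] := pselect (open V /\ V !=set0); last by exists set0 => /noV.
  by have [V' HV'] := baire_shrink cX hX (cF n) (thinF n) oV nV; exists V'.
(* A nested sequence of nonempty open sets, the closure of Vs n.+1 lying in
   Vs n minus F n; by compactness these closures have a common point. *)
pose S n V := proj1_sig (cid (shrink n V)).
pose fix Vs n := if n is m.+1 then S m (Vs m) else W°.
have Vs_open n : open (Vs n) /\ Vs n !=set0.
  elim: n => [|n [oV nV]] /=; first by split; [exact: open_interior | exists x].
  by have [] := proj2_sig (cid (shrink n (Vs n))) (conj oV nV).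
have Vs_step n : closure (Vs n.+1) `<=` Vs n `\` F n.
  by have [] := proj2_sig (cid (shrink n (Vs n))) (Vs_open n).
have Vs_decr n m : (n <= m)%N -> Vs m `<=` Vs n.
  move=> /subnK <-; elim: (m - n)%N => // k IH z Vz; apply: IH.
  by have [] := Vs_step (k + n)%N z (subset_closure Vz).
have [y Hy] : exists y, forall n, closure (Vs n.+1) y.
  apply: contrapT => noy.
  have [N HN] : exists N, forall y, ~ Vs N y.
    apply: (compact_uniform_index cX) => z.
    have /existsNP [n /existsNP [B /not_implyP [Bz BVs]]] :
      ~ forall n, closure (Vs n.+1) z by move=> Hz; apply: noy; exists z.
    exists n.+1, B => // w m Bw Hm Vw.
    by apply: BVs; exists w; split => //; apply: (Vs_decr _ _ Hm).
  by have [_ [y0 Vy0]] := Vs_open N; apply: (HN y0).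
exists y; first by have [/interior_subset] := Vs_step 0%N y (Hy 0%N).
by move=> n Fy; have [] := Vs_step n y (Hy n).
Qed.

Section ActionFacts.
Variables (X : topologicalType) (a : Dinf -> X -> X).
Hypothesis act : is_cont_action a.

Lemma act1 (x : X) : a d1 x = x.
Proof. by case: act. Qed.

Lemma act_comp (g h : Dinf) (x : X) : a g (a h x) = a (dmul g h) x.
Proof. by case: act => _ [-> _]. Qed.

Lemma act_invK (g : Dinf) (x : X) : a (dinv g) (a g x) = x.
Proof. by rewrite act_comp dmulVg act1. Qed.

Lemma act_cont (g : Dinf) : continuous (a g).
Proof. by case: act => _ []. Qed.

Lemma act_periodic (k : int) (y : X) :
  a (k, false) y = y -> forall q : int, a (q * k, false) y = y.
Proof.
move=> per.
have perN (j : nat) : a (j%:Z * k, false) y = y.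
  elim: j => [|j IH]; first by rewrite mul0r act1.
  rewrite -{2}per -{2}IH act_comp /dmul /=; congr (a (_, _) y).
  by rewrite -addn1 PoszD mulrDl mul1r addrC.
case=> j; first exact: perN.
by have := act_invK (j.+1%:Z * k, false) y; rewrite perN /dinv /= NegzE mulNr.
Qed.

Lemma reflection_orbit (k : int) (x : X) : a (k, true) x = x ->
  forall g, exists j, a g x = a (j, false) x.
Proof.
move=> fixx [m []]; last by exists m.
exists (m - k); rewrite -{1}fixx act_comp /dmul /=; congr (a (_, _) x); ring.
Qed.

Section Minimal.
Hypotheses (hX : hausdorff_space X) (minA : minimal_action a)
  (infX : infinite_set [set: X]).

(* In an infinite minimal system s acts without periodic points: a
   periodic orbit would be finite, closed and dense. *)
Lemma translation_free (k : int) (x : X) : a (k, false) x = x -> k = 0.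
Proof.
move=> perx; apply/eqP; apply: contrapT => /negP k0; apply: infX.
have perxe (e : bool) : a (k, false) (a (0, e) x) = a (0, e) x.
  case: e; last by rewrite (_ : (0, false) = d1) // act1.
  rewrite act_comp /dmul /= addr0 -{2}(act_periodic perx (-1)) act_comp.
  by rewrite /dmul /= mulN1r opprK add0r.
(* Every point of the orbit is s^i t^e x with 0 <= i < |k|. *)
pose f (p : 'I_`|k|%N * bool) := a ((p.1 : nat)%:Z, false) (a (0, p.2) x).
have fin_f : finite_set (range f) by exact/finite_image/finite_finset.
apply: (sub_finite_set _ fin_f) => y _.
have cl_f : closure (range f) = range f.
  apply/esym/closure_id.
  exact: (@accessible_finite_set_closed X).1 (hausdorff_accessible hX) _ fin_f.
have orb_y : closure [set a g x | g in [set: Dinf]] y by rewrite minA.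
rewrite -cl_f; apply: closureS orb_y => _ [[m e] _ <-].
have mod_lt : (`|(m %% k)%Z|%N < `|k|%N)%N.
  by have := ltz_mod m k0; have := modz_ge0 m k0; lia.
exists (Ordinal mod_lt, e) => //; rewrite /f /=.
rewrite (_ : `|(m %% k)%Z|%N%:Z = (m %% k)%Z); last by have := modz_ge0 m k0; lia.
rewrite -(act_periodic (perxe e) (m %/ k)%Z) !act_comp /dmul /=.
by rewrite addr0 addrC -divz_eq.
Qed.

Lemma reflection_fixed_translate (k j : int) (x : X) :
  a (k, true) x = x -> a (k, true) (a (j, false) x) = a (j, false) x -> j = 0.
Proof.
move=> fixx fixy.
have fix2 : a (k - 2 * j, true) x = x.
  have := congr1 (a (- j, false)) fixy; rewrite 2!act_comp /dmul /=.
  rewrite (_ : - j + k - j = k - 2 * j); last by ring.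
  by move=> ->; exact: (act_invK (j, false) x).
have : a (2 * j, false) x = x.
  have := congr1 (a (k, true)) fix2; rewrite fixx act_comp /dmul /=.
  by rewrite (_ : k - (k - 2 * j) = 2 * j); last ring.
by move=> /translation_free; lia.
Qed.

Hypothesis cX : compact [set: X].

(* An isolated point makes every point isolated (all orbits are dense and
   the action is by homeomorphisms), hence X finite. *)
Lemma isolated_point_finite (x : X) : open [set x] -> finite_set [set: X].
Proof.
move=> openx; apply: compact_discrete_finite => // y.
have : closure [set a g y | g in [set: Dinf]] x by rewrite minA.
move=> /(_ _ (open_nbhs_nbhs (conj openx erefl))) [_ [[g _ <-] /= gyx]].
rewrite (_ : [set y] = a g @^-1` [set x]).
  exact: (@continuousP X X (a g)).1 (@act_cont g) _ openx.
apply/seteqP; split => [z -> //|z /= gzx].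
by rewrite -(act_invK g z) gzx -gyx act_invK.
Qed.

(* A reflection fixes no nonempty open set: the only point of its orbit in
   such a set would be isolated. *)
Lemma reflection_fixed_thin (k : int) :
  has_empty_interior [set y | a (k, true) y = y].
Proof.
move=> U oU fixU; apply/eqP/negPn/negP => /set0P [x Ux].
have Ux_only z : U z -> z = x.
  move=> Uz; apply: contrapT => zx.
  have oV : open (U `&` ~` [set x]).
    apply: openI => //; apply: closed_openC.
    exact: accessible_closed_set1 (hausdorff_accessible hX) x.
  have : closure [set a g x | g in [set: Dinf]] z by rewrite minA.
  move=> /(_ _ (open_nbhs_nbhs (conj oV (conj Uz zx)))) [_ [[g _ <-] [Ug ng]]].
  have [j gj] := reflection_orbit (fixU x Ux) g; rewrite gj in Ug ng.
  apply: ng; rewrite /= (reflection_fixed_translate (fixU x Ux) (fixU _ Ug)).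
  by rewrite (_ : (0, false) = d1) // act1.
apply: infX; apply: (isolated_point_finite (x := x)).
rewrite (_ : [set x] = U) //; apply/seteqP; split => [z -> //|z /Ux_only //].
Qed.

End Minimal.
End ActionFacts.

Lemma has_empty_interior_preimage (X : topologicalType) (phi psi : X -> X)
    (A : set X) : continuous psi -> cancel phi psi -> cancel psi phi ->
  has_empty_interior A -> has_empty_interior (phi @^-1` A).
Proof.
move=> psic phiK psiK thinA U oU UA.
have psiU0 : psi @^-1` U = set0.
  apply: thinA => [|z /UA /=]; first exact: (@continuousP X X psi).1 psic _ oU.
  by rewrite psiK.
apply/seteqP; split => // u Uu.
have psiUu : (psi @^-1` U) (phi u) by rewrite /= phiK.
by rewrite psiU0 in psiUu.
Qed.

Definition free_at (X : Type) (a : Dinf -> X -> X) (x : X) : Prop :=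
  forall g, a g x = x -> g = d1.

(* For minimal actions alpha, beta on an infinite compact Hausdorff space and
   a homeomorphism phi, the points x with alpha free at x and beta free at
   phi x are dense: by Baire's theorem they avoid the countably many closed
   fixed sets of reflections, which have empty interior. *)
Theorem free_points_dense (X : topologicalType) (alpha beta : Dinf -> X -> X)
    (phi psi : X -> X) :
  compact [set: X] -> hausdorff_space X -> infinite_set [set: X] ->
  is_cont_action alpha -> is_cont_action beta ->
  minimal_action alpha -> minimal_action beta ->
  continuous phi -> continuous psi -> cancel phi psi -> cancel psi phi ->
  forall (x : X) W, nbhs x W ->
  exists2 y, W y & free_at alpha y /\ free_at beta (phi y).
Proof.
move=> cX hX infX actA actB minA minB phic psic phiK psiK x W Wx.
pose r (n : nat) : int := odflt 0 (unpickle n).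
pose F n := [set y | alpha (r n, true) y = y] `|`
            phi @^-1` [set z | beta (r n, true) z = z].
have fixA_closed n : closed [set y | alpha (r n, true) y = y].
  exact: closed_fixed_points hX (@act_cont _ _ actA (r n, true)).
have cF n : closed (F n).
  apply: closedU => //; apply: ((continuous_closedP phi).1 phic).
  exact: closed_fixed_points hX (@act_cont _ _ actB (r n, true)).
have thinF n : has_empty_interior (F n).
  apply: has_empty_interiorU => //; first exact: reflection_fixed_thin.
  exact/(has_empty_interior_preimage psic phiK psiK)/reflection_fixed_thin.
have [y Wy notF] := compact_baire cX hX cF thinF Wx.
have r_pickle k : r (pickle k) = k by rewrite /r pickleK.
exists y => //; split => -[k []] fixk.
- by case: (notF (pickle k)); left; rewrite /= r_pickle.
- by rewrite (translation_free actA hX minA infX fixk).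
- by case: (notF (pickle k)); right; rewrite /= r_pickle.
- by rewrite (translation_free actB hX minB infX fixk).
Qed.

Definition orient_plus (X : Type) (c : Dinf -> X -> Dinf) : set X :=
  [set x | exists M : nat, forall n : int,
     (dmetric (c (dspow n) x) (dspow n) <= M)%N].
Definition orient_minus (X : Type) (c : Dinf -> X -> Dinf) : set X :=
  [set x | exists M : nat, forall n : int,
     (dmetric (c (dspow n) x) (dspow (- n)) <= M)%N].

Section OrbitEquivalence.
Variables (X : topologicalType) (alpha beta : Dinf -> X -> X)
  (phi psi : X -> X) (c b : Dinf -> X -> Dinf).
Hypotheses (cX : compact [set: X]) (hX : hausdorff_space X)
  (infX : infinite_set [set: X])
  (actA : is_cont_action alpha) (actB : is_cont_action beta)
  (minA : minimal_action alpha) (minB : minimal_action beta)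
  (phic : continuous phi) (psic : continuous psi)
  (phiK : cancel phi psi) (psiK : cancel psi phi)
  (cc : cont_DX c) (cb : cont_DX b)
  (phi_eq : forall g x, phi (alpha g x) = beta (c g x) (phi x))
  (psi_eq : forall h y, psi (beta h y) = alpha (b h y) (psi y))
  (cocycle : forall g1 g2 x,
     c (dmul g1 g2) x = dmul (c g1 (alpha g2 x)) (c g2 x)).

Lemma cocycle1 (x : X) : c d1 x = d1.
Proof.
have := congr1 (dmul (dinv (c d1 x))) (cocycle d1 d1 x).
by rewrite act1 // dmulg1 dmulVg dmulKg => /esym.
Qed.

Lemma free_orbit_inj (a : Dinf -> X -> X) (x : X) : is_cont_action a ->
  free_at a x -> injective (a ^~ x).
Proof.
move=> act freex g g' /= E; apply: (@dmul_inj (dinv g')).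
by rewrite dmulVg; apply: freex; rewrite -act_comp // E act_invK.
Qed.

(* The cocycle reads the orbit of x inside the orbit of phi x; at a doubly
   free point it is therefore a bijection of D_oo. *)
Lemma cocycle_inj (x : X) : free_at alpha x -> injective (c ^~ x).
Proof.
move=> freex g g' /= E; apply: (free_orbit_inj actA freex).
by apply: (can_inj phiK); rewrite /= !phi_eq E.
Qed.

Lemma cocycle_surj (x : X) : free_at beta (phi x) ->
  forall h, exists g, c g x = h.
Proof.
move=> freepx h; exists (b h (phi x)); apply: (free_orbit_inj actB freepx).
by rewrite /= -phi_eq -[z in alpha _ z]phiK -psi_eq psiK.
Qed.

Lemma cocycle_left_mul (x : X) (g g' h : Dinf) : free_at alpha x ->
  c g x = dmul h (c g' x) -> g = dmul (b h (phi (alpha g' x))) g'.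
Proof.
move=> freex E; apply: (free_orbit_inj actA freex) => /=.
rewrite -act_comp // -[alpha g x]phiK phi_eq E -act_comp // -phi_eq.
by rewrite psi_eq phiK.
Qed.

Lemma cocycle_coord_step (h g : Dinf) (x : X) :
  `|coord (c (dmul h g) x) - coord (c g x)| = `|(c h (alpha g x)).1|.
Proof. by rewrite cocycle coord_mul. Qed.

Section BoundedGenerators.
Variable L : nat.
Hypotheses (L_gt0 : (0 < L)%N)
  (bound_s : forall y, (`|(c ds y).1| <= L)%N)
  (bound_t : forall y, (`|(c dt y).1| <= L)%N)
  (bound_b : forall a y, (`|(b (gen_val a) y).1| <= L)%N).

Lemma cocycle_word_bound (x : X) : free_at alpha x -> free_at beta (phi x) ->
  forall ws g1 g2, c g2 x = dmul (eval_word ws) (c g1 x) ->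
  `|coord g2 - coord g1| <= (L * size ws)%N%:Z.
Proof.
move=> freex freepx; elim=> [|a ws IH] g1 g2 /=.
  by rewrite dmul1g => /(cocycle_inj freex) ->; rewrite subrr.
rewrite -dmulA => E.
have [g' Eg'] := cocycle_surj freepx (dmul (eval_word ws) (c g1 x)).
have := IH g1 g' Eg'.
have /(cocycle_left_mul freex) Eg2 : c g2 x = dmul (gen_val a) (c g' x).
  by rewrite E Eg'.
have := coord_mul (b (gen_val a) (phi (alpha g' x))) g'; rewrite -Eg2.
have := bound_b a (phi (alpha g' x)); rewrite mulnS.
set u := coord g2; set v := coord g'; set w := coord g1.
by set z := (b _ _).1; set y := (L * size ws)%N; clearbody u v w z y; lia.
Qed.

(* Coarse injectivity, from a geodesic word for c g2 x (c g1 x)^-1. *)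
Lemma cocycle_expand (x : X) : free_at alpha x -> free_at beta (phi x) ->
  forall g1 g2, `|coord g2 - coord g1|
    <= L%:Z * (`|coord (c g2 x) - coord (c g1 x)| + 1).
Proof.
move=> freex freepx g1 g2; set w := dmul (c g2 x) (dinv (c g1 x)).
have [ws [size_ws eval_ws]] := geodesic_word w.
have := @cocycle_word_bound x freex freepx ws g1 g2.
rewrite eval_ws /w -dmulA dmulVg dmulg1 => /(_ erefl) bound.
apply: (le_trans bound); rewrite PoszM; apply: ler_wpM2l => //.
have := coord_quot (c g1 x) (c g2 x); rewrite -/w size_ws /dlen.
by case: (w.2) => /=; lia.
Qed.

Lemma cocycle_line_qi (x : X) : free_at alpha x -> free_at beta (phi x) ->
  line_qi L (c ^~ x).
Proof.
move=> freex freepx; split => //.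
- exact: cocycle_inj.
- exact: cocycle_surj.
- case=> m []; rewrite /axis /=; last by rewrite subrr.
  rewrite [coord (m, true)]/coord /=.
  have -> : (m, true) = dmul dt (- m, false) by rewrite /dmul /= opprK add0r.
  have := cocycle_coord_step dt (- m, false) x.
  have := bound_t (alpha (- m, false) x).
  by set u := coord _; set v := coord _; set w := (c dt _).1; clearbody u v w; lia.
- move=> n; rewrite /axis; have -> : (n + 1, false) = dmul ds (n, false) by rewrite /dmul /= addrC.
  have := cocycle_coord_step ds (n, false) x.
  have := bound_s (alpha (n, false) x).
  by set u := coord _; set v := coord _; set w := (c ds _).1; clearbody u v w; lia.
- exact: cocycle_expand.
- by rewrite /axis (_ : (0, false) = d1) // cocycle1.
Qed.

End BoundedGenerators.

(* By compactness the cocycles are uniformly bounded on generators. *)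
Lemma cocycle_generators_bounded : exists L : nat, [/\ (0 < L)%N,
  forall y, (`|(c ds y).1| <= L)%N, forall y, (`|(c dt y).1| <= L)%N &
  forall a y, (`|(b (gen_val a) y).1| <= L)%N].
Proof.
have bnd (f : Dinf -> X -> Dinf) : cont_DX f ->
    forall g, exists N, forall y, (`|(f g y).1| <= N)%N.
  by move=> fc g; exact: (@locally_constant_bounded _ _ (f g) (fun h => `|h.1|%N) cX (fc g)).
have [Ns Hs] := bnd _ cc ds; have [Nt Ht] := bnd _ cc dt.
have [N1 H1] := bnd _ cb (gen_val GS); have [N2 H2] := bnd _ cb (gen_val GSinv).
have [N3 H3] := bnd _ cb (gen_val GT).
exists (Ns + Nt + N1 + N2 + N3).+1; split => // [y|y|[] y].
- by have := Hs y; lia.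
- by have := Ht y; lia.
- by have := H1 y; lia.
- by have := H2 y; lia.
- by have := H3 y; lia.
Qed.

Lemma axis_locally_constant (x : X) (n : int) :
  \forall y \near x, axis (c ^~ y) n = axis (c ^~ x) n.
Proof. by apply: filterS (cc (n, false) x) => y; rewrite /axis /= => ->. Qed.

(* At
   doubly free points this is rigidity; in general it transfers from the
   dense set of such points since the trace is locally constant. *)
Lemma axis_dichotomy : exists M : nat, forall x n,
  (0 < axis (c ^~ x) (M + 1)%N%:Z -> `|axis (c ^~ x) n - n| <= M%:Z) /\
  (~ 0 < axis (c ^~ x) (M + 1)%N%:Z -> `|axis (c ^~ x) n + n| <= M%:Z).
Proof.
have [L [L_gt0 Bs Bt Bb]] := cocycle_generators_bounded.
exists (qi_bound L) => x n; set N := (qi_bound L + 1)%N%:Z.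
have [y [/= EN En] [freey freepy]] := free_points_dense cX hX infX actA actB
  minA minB phic psic phiK psiK
  (filterI (axis_locally_constant x N) (axis_locally_constant x n)).
have [near|near] := line_qi_rigid (cocycle_line_qi L_gt0 Bs Bt Bb freey freepy);
  have := near N; have := near n; rewrite EN En /N => bn bN; split => // sgn; lia.
Qed.

Lemma dmetric_spow (g : Dinf) (m : int) :
  dmetric g (dspow m) = (`|m - coord g|%N + g.2)%N.
Proof. by rewrite dmetricE /coord /dspow /= addbF. Qed.

Theorem orient_sign : exists N : int, forall x,
  (orient_plus c x <-> 0 < axis (c ^~ x) N) /\
  (orient_minus c x <-> ~ 0 < axis (c ^~ x) N).
Proof.
have [M dich] := axis_dichotomy; exists (M + 1)%N%:Z => x.
have qE n : coord (c (dspow n) x) = axis (c ^~ x) n by [].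
split; split.
- case=> M1 bnd; apply: contrapT => neg.
  have := bnd (M1 + M + 1)%N%:Z; rewrite dmetric_spow qE.
  by have := (dich x (M1 + M + 1)%N%:Z).2 neg; case: (_.2); lia.
- move=> pos; exists M.+1 => n; rewrite dmetric_spow qE.
  by have := (dich x n).1 pos; case: (_.2); lia.
- case=> M1 bnd pos.
  have := bnd (M1 + M + 1)%N%:Z; rewrite dmetric_spow qE.
  by have := (dich x (M1 + M + 1)%N%:Z).1 pos; case: (_.2); lia.
- move=> neg; exists M.+1 => n; rewrite dmetric_spow qE.
  by have := (dich x n).2 neg; case: (_.2); lia.
Qed.

End OrbitEquivalence.

Theorem mainTheorem9 (X : topologicalType)
  (alpha beta : Dinf -> X -> X)
  (phi psi : X -> X) (c b : Dinf -> X -> Dinf) :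
  compact [set: X] -> hausdorff_space X -> infinite_set [set: X] ->
  is_cont_action alpha -> is_cont_action beta ->
  minimal_action alpha -> minimal_action beta ->
  (* continuous orbit equivalence *)
  continuous phi -> continuous psi ->
  cancel phi psi -> cancel psi phi ->
  cont_DX c -> cont_DX b ->
  (forall g x, phi (alpha g x) = beta (c g x) (phi x)) ->
  (forall h y, psi (beta h y) = alpha (b h y) (psi y)) ->
  (* c is a cocycle *)
  (forall g1 g2 x, c (dmul g1 g2) x = dmul (c g1 (alpha g2 x)) (c g2 x)) ->
  let Xplus := [set x | exists M : nat, forall n : int,
                  (dmetric (c (dspow n) x) (dspow n) <= M)%N] in
  let Xminus := [set x | exists M : nat, forall n : int,
                  (dmetric (c (dspow n) x) (dspow (- n)%R) <= M)%N] in
  [/\ [set: X] = Xplus `|` Xminus, Xplus `&` Xminus = set0,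
      open Xplus /\ closed Xplus & open Xminus /\ closed Xminus].
Proof.
move=> cX hX infX actA actB minA minB phic psic phiK psiK cc cb phi_eq psi_eq
  cocycle Xplus Xminus.
have [N signE] := orient_sign cX hX infX actA actB minA minB phic psic phiK
  psiK cc cb phi_eq psi_eq cocycle.
pose P := [set x | 0 < axis (c ^~ x) N].
have plusE : Xplus = P by apply/seteqP; split => x /(signE x).1.
have minusE : Xminus = ~` P by apply/seteqP; split => x /(signE x).2.
have openP : open P.
  rewrite openE => x Px; apply: filterS (axis_locally_constant cc x N).
  by move=> y; rewrite /P /= => ->.
have openCP : open (~` P).
  rewrite openE => x Px; apply: filterS (axis_locally_constant cc x N).
  by move=> y; rewrite /P /= => ->.
rewrite plusE minusE; split.
- by rewrite setUv.
- by rewrite setICr.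
- by split => //; rewrite -[P]setCK; apply: open_closedC.
- by split => //; apply: open_closedC.
Qed.
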